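(* An instance of the Side-Access Compact Retrieval Problem admits a feasible solution if and only if for every target $b\in\mathcal B$ and every stack $t<s(b)$ we have $h(t)\ge h(b)-R(b)$.
   Context: A slice is a sequence of stacks $T=(1,\dots,m)$, indexed from the entry side (stack $1$) outward; ''left'' means smaller index. Stack $t$ initially consists of $h(t)\ge 0$ unit loads (ULs) stacked without gaps; a UL at height $k$ has exactly $k$ ULs below it in its stack. A pick-list $\mathcal B$ of target ULs is given; target $b$ lies in stack $s(b)$ at initial height $h(b)$; $R(b)$ is the number of targets initially located below $b$ in stack $s(b)$. Retrieval proceeds in cycles $c=1,2,\dots$; $h_c(t)$, $h_c(b)$ are the heights of stack $t$ and of a not-yet-retrieved target $b$ at the start of cycle $c$ ($h_1=h$). In cycle $c$ one chooses clearance levels $\ell_c(t)\in\{0,\dots,h_c(t)\}$: the top $e_c(t)=h_c(t)-\ell_c(t)$ ULs of stack $t$ are lifted for the whole cycle. Then a sequence $(b_{c,1},\dots,b_{c,k})$ of targets is retrieved, with residual heights $d_{c,0}=\ell_c$ and $d_{c,i}(t)=d_{c,i-1}(t)-1$ if $t=s(b_{c,i})$, else $d_{c,i}(t)=d_{c,i-1}(t)$. Retrieving $b$ (stack $t$, height $h=h_c(b)$) as the $i$-th retrieval requires accessibility: (a) $d_{c,i-1}(t)=h+1$ and (b) $d_{c,i-1}(t')=h$ for all $t'<t$. Afterwards lifted ULs are lowered, $h_{c+1}(t)=d_{c,k}(t)+e_c(t)$, and each remaining target's height decreases by the number of targets retrieved in cycle $c$ below it in its stack. Non-targets are never removed. A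 solution is feasible if every target of $\mathcal B$ is retrieved exactly once and is accessible when retrieved. *)

From mathcomp Require Import all_boot.
Set Implicit Arguments. Unset Strict Implicit. Unset Printing Implicit Defensive.

(* Stacks are indexed by 'I_m (stack 0 is the entry side; "left" = smaller
   index).  A unit load is identified by its initial position: a pair
   (t, k) = (stack, initial height).  A target b is such a pair:
   s(b) = b.1, h(b) = b.2. *)

Definition target (m : nat) := ('I_m * nat)%type.

Definition Rb (m : nat) (B : seq (target m)) (b : target m) : nat :=
  count (fun b' : target m => (b'.1 == b.1) && (b'.2 < b.2)) B.

Definition instance_ok (m : nat) (h : 'I_m -> nat) (B : seq (target m)) :=
  uniq B /\ (forall b, b \in B -> b.2 < h b.1).

Record cycle (m : nat) := Cycle {
  clear : 'I_m -> nat;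
  retr  : seq (target m) }.

Definition decr (m : nat) (d : 'I_m -> nat) (t : 'I_m) : 'I_m -> nat :=
  fun t' => if t' == t then (d t').-1 else d t'.

(* Accessibility of the retrieval sequence, given start-of-cycle target
   heights hb and current residual heights d; also returns final residuals. *)
Fixpoint accessible_seq (m : nat) (hb : target m -> nat) (d : 'I_m -> nat)
    (r : seq (target m)) : Prop :=
  match r with
  | [::] => True
  | b :: r' =>
      d b.1 = (hb b).+1 /\ (forall t' : 'I_m, t' < b.1 -> d t' = hb b) /\
      accessible_seq hb (decr d b.1) r'
  end.

Fixpoint residual (m : nat) (d : 'I_m -> nat) (r : seq (target m)) : 'I_m -> nat :=
  match r with
  | [::] => d
  | b :: r' => residual (decr d b.1) r'
  end.

Definition cycle_ok (m : nat) (hs : 'I_m -> nat) (hb : target m -> nat)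
    (c : cycle m) : Prop :=
  (forall t, clear c t <= hs t) /\ accessible_seq hb (clear c) (retr c).

Definition next_hs (m : nat) (hs : 'I_m -> nat) (c : cycle m) : 'I_m -> nat :=
  fun t => residual (clear c) (retr c) t + (hs t - clear c t).

Definition next_hb (m : nat) (hb : target m -> nat) (c : cycle m) :
    target m -> nat :=
  fun b => hb b - count (fun b' : target m => (b'.1 == b.1) && (hb b' < hb b))
                        (retr c).

Fixpoint cycles_ok (m : nat) (hs : 'I_m -> nat) (hb : target m -> nat)
    (cs : seq (cycle m)) : Prop :=
  match cs with
  | [::] => True
  | c :: cs' => cycle_ok hs hb c /\ cycles_ok (next_hs hs c) (next_hb hb c) cs'
  end.

Definition feasible_solution (m : nat) (h : 'I_m -> nat) (B : seq (target m))
    (cs : seq (cycle m)) : Prop :=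
  perm_eq (flatten (map (@retr m) cs)) B /\
  cycles_ok h (fun b : target m => b.2) cs.

Definition feasible (m : nat) (h : 'I_m -> nat) (B : seq (target m)) : Prop :=
  exists cs, feasible_solution h B cs.

From Pilot Require Import Defs.
From mathcomp Require Import all_boot zify.

(* Let D be the targets retrieved so far. A target b not yet retrieved then
   sits at height h(b) - #{targets of D below b in s(b)} ([heights_after D b]):
   targets of one stack keep their relative order, so every retrieval below b
   lowers b by exactly one.
   Necessity: when b is retrieved, every stack t < s(b) is cleared exactly to
   the current height of b, and stack heights never grow; hence
   h(t) >= h(b) - #{targets below b retrieved earlier} >= h(b) - R(b).
   Sufficiency: retrieve one target per cycle, rightmost stack first and
   bottom-up within a stack. When b is retrieved, all targets below it are
   gone, so its height is h(b) - R(b), while the stacks to its left are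
   untouched and still have height h(t). *)

Set Implicit Arguments. Unset Strict Implicit. Unset Printing Implicit Defensive.

Section SideAccessRetrieval.

Variable m : nat.
Implicit Types (hs : 'I_m -> nat) (hb : target m -> nat) (b x y : target m).
Implicit Types (D L r : seq (target m)) (c : Defs.cycle m).

Definition heights_after D b := b.2 - Rb D b.

Lemma heights_after_cat D1 D2 b :
  heights_after (D1 ++ D2) b = heights_after D1 b - Rb D2 b.
Proof. by rewrite /heights_after /Rb count_cat subnDA. Qed.

Lemma Rb_perm D1 D2 : perm_eq D1 D2 -> Rb D1 =1 Rb D2.
Proof. by move=> /permP eqD b; apply: eqD. Qed.

Lemma count_stack_range D (t : 'I_m) lo hi : uniq D ->
  count (fun z : target m => (z.1 == t) && (lo <= z.2 < hi)) D <= hi - lo.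
Proof.
move=> uD; rewrite -size_filter -(size_map snd) -(size_iota lo (hi - lo)).
apply: uniq_leq_size.
  rewrite map_inj_in_uniq ?filter_uniq // => -[x1 x2] [y1 y2].
  by rewrite !mem_filter /= => /andP[/andP[/eqP-> _] _] /andP[/andP[/eqP-> _] _] ->.
move=> w /mapP[z]; rewrite mem_filter => /andP[/andP[_ /andP[lo_z z_hi]] _] ->.
by rewrite mem_iota; apply/andP; split; lia.
Qed.

(* At most h(y) - h(x) - 1 targets of D lie strictly between x and y. *)
Lemma heights_after_mono D x y : uniq D -> x \notin D -> x.1 = y.1 -> x.2 < y.2 ->
  heights_after D x < heights_after D y.
Proof.
move=> uD xD exy lxy.
pose between := fun z : target m => (z.1 == y.1) && (x.2 <= z.2 < y.2).
have splitRb : Rb D y = Rb D x + count between D.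
  rewrite /Rb /between -exy; elim: D {uD xD} => //= z D ->.
  case: (z.1 == x.1) => //=; case: (ltnP z.2 x.2); case: (ltnP z.2 y.2) => //=; lia.
have := count_stack_range y.1 x.2 y.2 (D := x :: D).
rewrite /= xD uD exy eqxx leqnn lxy -/(between) => /(_ isT) le_between.
have le_below : Rb D x <= x.2 - 0 by apply: count_stack_range.
rewrite /heights_after splitRb; lia.
Qed.

Lemma heights_after_ltE D x y : uniq D -> x \notin D -> y \notin D -> x != y ->
  x.1 = y.1 -> (heights_after D x < heights_after D y) = (x.2 < y.2).
Proof.
move=> uD xD yD nxy exy; case: (ltngtP x.2 y.2) => [lxy|lyx|exy2].
- exact: heights_after_mono.
- by apply/negbTE; rewrite -leqNgt ltnW // heights_after_mono.
- by move: nxy; rewrite -pair_eqE /pair_eq exy exy2 !eqxx.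
Qed.

Lemma next_hb_heights_after hb D c b :
  b \notin D ++ retr c -> uniq (D ++ retr c) ->
  {in b :: retr c, hb =1 heights_after D} ->
  next_hb hb c b = heights_after (D ++ retr c) b.
Proof.
rewrite mem_cat negb_or cat_uniq => /andP[bD br] /and3P[uD /hasPn rD _] hb_eq.
rewrite /next_hb heights_after_cat hb_eq ?mem_head //; congr (_ - _).
apply: eq_in_count => z zr /=.
rewrite !hb_eq ?mem_head ?in_cons ?zr ?orbT //.
case: (eqVneq z.1 b.1) => //= ezb.
by apply: heights_after_ltE => //; [exact: rD | apply: contraNneq br => <-].
Qed.

Lemma decr_le (d : 'I_m -> nat) t t' : decr d t t' <= d t'.
Proof. by rewrite /decr; case: ifP => // _; apply: leq_pred. Qed.

Lemma residual_le (d : 'I_m -> nat) r t : residual d r t <= d t.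
Proof. by elim: r d => //= b r IH d; apply: leq_trans (IH _) (decr_le _ _ _). Qed.

Lemma next_hs_le hs hb c : cycle_ok hs hb c -> forall t, next_hs hs c t <= hs t.
Proof.
move=> [clear_le _] t; rewrite /next_hs.
by have := residual_le (clear c) (retr c) t; have := clear_le t; lia.
Qed.

Lemma accessible_seq_le hb (d : 'I_m -> nat) r : accessible_seq hb d r ->
  forall b, b \in r -> forall t : 'I_m, t < b.1 -> hb b <= d t.
Proof.
elim: r d => //= b0 r IH d [_ [left_eq acc]] b.
rewrite in_cons => /predU1P[-> t /left_eq -> // | br t tb].
exact: leq_trans (IH _ acc b br t tb) (decr_le _ _ _).
Qed.

Definition retrieved (cs : seq (Defs.cycle m)) := flatten (map (@retr m) cs).

Lemma cycles_ok_heights_after_le (h : 'I_m -> nat) cs : forall hs hb D,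
  cycles_ok hs hb cs -> uniq (D ++ retrieved cs) -> (forall t, hs t <= h t) ->
  {in retrieved cs, hb =1 heights_after D} ->
  forall b, b \in retrieved cs -> forall t : 'I_m, t < b.1 ->
    heights_after (D ++ retrieved cs) b <= h t.
Proof.
rewrite /retrieved; elim: cs => //= c cs IH hs hb D.
move=> [[clear_le acc] ok_cs] uDF hs_le hb_eq b.
rewrite mem_cat => /orP[br t tb | bF].
  rewrite heights_after_cat -hb_eq ?mem_cat ?br //.
  by have := accessible_seq_le acc br tb; have := clear_le t; have := hs_le t; lia.
rewrite catA in uDF *; move: (uDF); rewrite cat_uniq => /and3P[uDr /hasPn DrF _].
apply: IH ok_cs uDF _ _ b bF => [t|z zF].
  exact: leq_trans (next_hs_le (conj clear_le acc) t) (hs_le t).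
apply: next_hb_heights_after => //; first exact: DrF.
move=> w; rewrite in_cons => /predU1P[-> | wr]; apply: hb_eq.
  by rewrite mem_cat zF orbT.
by rewrite mem_cat wr.
Qed.

Lemma feasible_heights_bound h B : uniq B -> feasible h B ->
  forall b, b \in B -> forall t : 'I_m, t < b.1 -> b.2 - Rb B b <= h t.
Proof.
move=> uB [cs [permB ok]] b bB t tb; rewrite -/(retrieved cs) in permB.
rewrite -(Rb_perm permB).
apply: (cycles_ok_heights_after_le (D := [::]) ok) tb => //.
- by rewrite (perm_uniq permB).
- by move=> b' _; rewrite /heights_after /Rb subn0.
- by rewrite (perm_mem permB).
Qed.

Definition retrieve_one b v : Defs.cycle m :=
  Cycle (fun t : 'I_m => if t < b.1 then v else if t == b.1 then v.+1 else 0) [:: b].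

Lemma retrieve_one_ok hs hb b : hb b < hs b.1 ->
  (forall t : 'I_m, t < b.1 -> hb b <= hs t) -> cycle_ok hs hb (retrieve_one b (hb b)).
Proof.
move=> hb_lt left_le; split=> [t|] /=.
  by case: ifP => [/left_le // | _]; case: eqP => // ->.
by rewrite ltnn eqxx; split=> //; split=> // t ->.
Qed.

Lemma next_hs_retrieve_one hs hb b : cycle_ok hs hb (retrieve_one b (hb b)) ->
  forall t, next_hs hs (retrieve_one b (hb b)) t = hs t - (t == b.1).
Proof.
move=> [clear_le _] t; have := clear_le t; rewrite /next_hs /= /decr.
by case: eqP => [->|_]; rewrite ?ltnn /=; lia.
Qed.

Definition retrieval_le : rel (target m) :=
  fun x y => (y.1 < x.1) || ((y.1 == x.1) && (x.2 <= y.2)).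

Lemma retrieval_le_total : total retrieval_le.
Proof. by move=> x y; rewrite /retrieval_le -!(inj_eq val_inj) /=; lia. Qed.

Lemma retrieval_le_trans : transitive retrieval_le.
Proof. by move=> y x z; rewrite /retrieval_le -!(inj_eq val_inj) /=; lia. Qed.

Lemma retrieval_le_stack x y : retrieval_le x y -> y.1 <= x.1.
Proof. by rewrite /retrieval_le -(inj_eq val_inj) /=; lia. Qed.

Lemma Rb_head b0 L : all (retrieval_le b0) L -> Rb (b0 :: L) b0 = 0.
Proof.
move=> /allP b0_le; apply/eqP; rewrite -leqn0 leqNgt -has_count /= ltnn andbF /=.
apply/hasPn => z /b0_le; rewrite /retrieval_le -!(inj_eq val_inj) /=; lia.
Qed.

Lemma retrieval_le_same_stack x y : retrieval_le x y -> x != y -> x.1 = y.1 ->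
  x.2 < y.2.
Proof.
rewrite /retrieval_le => le_xy nxy exy; rewrite ltn_neqAle.
move: le_xy nxy; rewrite -pair_eqE /pair_eq exy eqxx ltnn /= eq_sym => -> /=.
by rewrite andbT.
Qed.

Lemma retrieve_in_order L : forall D hs hb,
  uniq (D ++ L) -> pairwise retrieval_le L ->
  {in L, hb =1 heights_after D} -> {in L, forall b, hb b < hs b.1} ->
  (forall b, b \in L -> forall t : 'I_m, t < b.1 -> heights_after (D ++ L) b <= hs t) ->
  exists2 cs, retrieved cs = L & cycles_ok hs hb cs.
Proof.
elim: L => [|b0 L IH] D hs hb; first by exists [::].
rewrite pairwise_cons => uDL /andP[b0_le sortedL] hb_eq hb_lt left_le.
move: (uDL); rewrite cat_uniq /= => /and4P[uD /norP[b0D /hasPn LD] b0L _].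
have inL : {subset L <= b0 :: L} by move=> b bL; rewrite in_cons bL orbT.
have hb0 : hb b0 = heights_after (D ++ b0 :: L) b0.
  by rewrite heights_after_cat Rb_head // subn0 hb_eq ?mem_head.
set c := retrieve_one b0 (hb b0).
have ok_c : cycle_ok hs hb c.
  rewrite /c; apply: retrieve_one_ok => [|t tb]; first exact: hb_lt (mem_head _ _).
  by rewrite hb0; apply: left_le (mem_head _ _) t tb.
have hs' := next_hs_retrieve_one ok_c.
have hb'_eq : {in L, next_hb hb c =1 heights_after (D ++ [:: b0])}.
  move=> b bL; apply: next_hb_heights_after => /=.
  - by rewrite mem_cat mem_seq1 negb_or LD //; apply: contraNneq b0L => <-.
  - by rewrite cat_uniq uD /= orbF b0D.
  - by move=> w; rewrite !inE => /orP[] /eqP->; apply: hb_eq; rewrite ?mem_head ?inL.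
have hb'_lt : {in L, forall b, next_hb hb c b < next_hs hs c b.1}.
  move=> b bL; rewrite hb'_eq // heights_after_cat hs' /Rb /= addn0.
  have := hb_lt b (inL b bL); rewrite hb_eq ?inL //.
  case: (eqVneq b.1 b0.1) => [same | _] /=; last by rewrite !subn0.
  have lt_b0b : b0.2 < b.2.
    apply: retrieval_le_same_stack => //; first exact: (allP b0_le).
    by apply: contraNneq b0L => ->.
  rewrite lt_b0b same.
  have := heights_after_mono uD b0D (esym same) lt_b0b; lia.
have left_le' : forall b, b \in L -> forall t : 'I_m, t < b.1 ->
    heights_after ((D ++ [:: b0]) ++ L) b <= next_hs hs c t.
  move=> b bL t tb; rewrite -catA hs'.
  have b_left : b.1 <= b0.1 by apply/retrieval_le_stack/(allP b0_le).
  have -> : (t == b0.1) = false by apply/negbTE; rewrite neq_ltn (leq_trans tb b_left).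
  by rewrite subn0 left_le ?inL.
have uDL' : uniq ((D ++ [:: b0]) ++ L) by rewrite -catA.
have [cs flat_cs ok_cs] := IH _ _ _ uDL' sortedL hb'_eq hb'_lt left_le'.
by exists (c :: cs); rewrite // -flat_cs.
Qed.

Lemma feasible_of_heights_bound h B : instance_ok h B ->
  (forall b, b \in B -> forall t : 'I_m, t < b.1 -> b.2 - Rb B b <= h t) ->
  feasible h B.
Proof.
move=> [uB hB] left_le; pose L := sort retrieval_le B.
have permL : perm_eq L B by rewrite perm_sort.
have uL : uniq ([::] ++ L) by rewrite (perm_uniq permL).
have sortedL : pairwise retrieval_le L.
  rewrite -sorted_pairwise; last exact: retrieval_le_trans.
  exact: sort_sorted retrieval_le_total B.
have hb_eq : {in L, snd =1 heights_after [::]}.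
  by move=> b _; rewrite /heights_after /Rb subn0.
have hb_lt : {in L, forall b, b.2 < h b.1}.
  by move=> b; rewrite (perm_mem permL); apply: hB.
have left_le' : forall b, b \in L -> forall t : 'I_m, t < b.1 ->
    heights_after ([::] ++ L) b <= h t.
  by move=> b; rewrite (perm_mem permL) /heights_after (Rb_perm permL); apply: left_le.
have [cs flat_cs ok] := retrieve_in_order uL sortedL hb_eq hb_lt left_le'.
by exists cs; split; first rewrite -/(retrieved cs) flat_cs.
Qed.

End SideAccessRetrieval.

Theorem lemma1 (m : nat) (h : 'I_m -> nat) (B : seq (target m)) :
  instance_ok h B ->
  (feasible h B <->
   (forall b, b \in B -> forall t : 'I_m, t < b.1 -> b.2 - Rb B b <= h t)).
Proof.
move=> okB; split; first exact: feasible_heights_bound okB.1.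
exact: feasible_of_heights_bound.
Qed.
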